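(* Let $X$ be a finite set and let $K\colon X\times X\to\mathbb{R}$ satisfy $K(y,x)=K(x,y)\geq 0$ and $K(x,x)=0$ for all $x,y\in X$. If $K$ is conditionally strictly negative definite, then there exist a strictly positive definite kernel $A\colon X\times X\to\mathbb{R}$ and a constant $c>0$ such that $K(x,y)=-A(x,y)+c$ for all $x,y\in X$.
   Context: A kernel $K$ on a set $X$ is conditionally strictly negative definite if for every finitely supported $\lambda\colon X\to\mathbb{C}$ with $\lambda\neq 0$ and $\sum_{x\in X}\lambda(x)=0$ one has $\sum_{x,y\in X}\lambda(x)\overline{\lambda(y)}K(x,y)<0$. A hermitian kernel $A$ ($A(x,y)=\overline{A(y,x)}$) is strictly positive definite if for every finitely supported $\lambda\colon X\to\mathbb{C}$ with $\lambda\neq0$ one has $\sum_{x,y\in X}\lambda(x)\overline{\lambda(y)}A(x,y)>0$. *)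

From HB Require Import structures.
From mathcomp Require Import all_boot all_order all_algebra.
From mathcomp Require Import complex.
From mathcomp Require Import reals.
Set Implicit Arguments. Unset Strict Implicit. Unset Printing Implicit Defensive.
Import Order.TTheory GRing.Theory Num.Theory.
Local Open Scope ring_scope.
Local Open Scope complex_scope.

(* Kernels on a finite set X with real values; coefficients lambda are complex
   (complex R = R[i]); since X is finite every lambda is finitely supported. *)

Definition kquad (R : rcfType) (X : finType) (K : X -> X -> R)
  (lam : X -> R[i]) : R[i] :=
  \sum_(x : X) \sum_(y : X) lam x * (lam y)^* * (K x y)%:C.

Definition cond_strict_neg_def (R : rcfType) (X : finType) (K : X -> X -> R) : Prop :=
  forall lam : X -> R[i], (exists x, lam x != 0) -> \sum_(x : X) lam x = 0 ->
    kquad K lam < 0.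

Definition hermitian_kernel (R : rcfType) (X : finType) (A : X -> X -> R) : Prop :=
  forall x y, ((A x y)%:C : R[i]) = ((A y x)%:C)^*.

Definition strict_pos_def (R : rcfType) (X : finType) (A : X -> X -> R) : Prop :=
  hermitian_kernel A /\
  forall lam : X -> R[i], (exists x, lam x != 0) -> 0 < kquad A lam.

From HB Require Import structures.
From mathcomp Require Import all_boot all_order all_algebra.
From mathcomp Require Import complex.
From mathcomp Require Import reals.
From mathcomp Require Import ring lra.
Import Order.TTheory GRing.Theory Num.Theory.
Local Open Scope ring_scope.
Set Implicit Arguments. Unset Strict Implicit.

(* Fix x0 and write s a = \sum_x a x.  The kernel
   G x y = K x x0 + K x0 y - K x y - K x0 x0 satisfies Q_G a = - Q_K (a - s a * delta_x0),
   so it is positive semidefinite, and definite on the hyperplane s = 0; hence P = 1 + G is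
   positive definite, thus invertible, and L a = \sum_x a x K x x0 equals B_P a v for some v.
   From Q_K = 2 s L - Q_G - s^2 K x0 x0 and 2 B_P a (s v) <= Q_P a + s^2 Q_P v one gets
   Q_K a <= (c - 1) s^2 with c = 2 + Q_P v + |K x0 x0|, so A = c - K has Q_A a >= s^2, while
   Q_A a = - Q_K a > 0 when s = 0.  Complex coefficients reduce to real ones since a
   symmetric real kernel has Q(lam) = Q(Re lam) + Q(Im lam). *)

Definition bform (R : comNzRingType) (X : finType) (P : X -> X -> R) (a w : X -> R) : R :=
  \sum_x \sum_y a x * w y * P x y.

Definition kapp (R : comNzRingType) (X : finType) (P : X -> X -> R) (w : X -> R) (x : X) : R :=
  \sum_y P x y * w y.

Definition posdef (R : realFieldType) (X : finType) (P : X -> X -> R) : Prop :=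
  forall a : X -> R, (exists x, a x != 0) -> 0 < bform P a a.

Section BilinearForm.
Variables (R : comNzRingType) (X : finType).
Implicit Types (P Q : X -> X -> R) (a w : X -> R).

Lemma bformE P a w : bform P a w = \sum_x a x * kapp P w x.
Proof.
apply: eq_bigr => x _; rewrite mulr_sumr; apply: eq_bigr => y _.
by rewrite -mulrA [P x y * _]mulrC.
Qed.

Lemma bformC P : (forall x y, P y x = P x y) -> forall a w, bform P a w = bform P w a.
Proof.
move=> Psym a w; rewrite /bform exchange_big; apply: eq_bigr => x _.
by apply: eq_bigr => y _; rewrite Psym mulrAC mulrC mulrA.
Qed.

Lemma bform_eq0 P a w : (forall x, a x = 0) -> bform P a w = 0.
Proof. by move=> a0; rewrite bformE big1 // => x _; rewrite a0 mul0r. Qed.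

Lemma eq_bform P Q a w : (forall x y, P x y = Q x y) -> bform P a w = bform Q a w.
Proof. by move=> PQ; apply: eq_bigr => x _; apply: eq_bigr => y _; rewrite PQ. Qed.

Lemma bform_kerD P Q a w :
  bform (fun x y => P x y + Q x y) a w = bform P a w + bform Q a w.
Proof.
rewrite /bform -big_split; apply: eq_bigr => x _; rewrite -big_split.
by apply: eq_bigr => y _; rewrite mulrDr.
Qed.

Lemma bform_kerB P Q a w :
  bform (fun x y => P x y - Q x y) a w = bform P a w - bform Q a w.
Proof.
rewrite /bform -sumrB; apply: eq_bigr => x _; rewrite -sumrB.
by apply: eq_bigr => y _; rewrite mulrBr.
Qed.

Lemma bform_rank1 (f g : X -> R) a w :
  bform (fun x y => f x * g y) a w = (\sum_x a x * f x) * \sum_y w y * g y.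
Proof.
rewrite /bform mulr_suml; apply: eq_bigr => x _; rewrite mulr_sumr.
by apply: eq_bigr => y _; rewrite mulrACA.
Qed.

Lemma bform_kerl (f : X -> R) a w :
  bform (fun x y => f x) a w = (\sum_x a x * f x) * \sum_y w y.
Proof.
rewrite -(eq_bform _ _ (fun x y => mulr1 (f x))) bform_rank1.
by congr (_ * _); apply: eq_bigr => y _; rewrite mulr1.
Qed.

Lemma bform_kerr (g : X -> R) a w :
  bform (fun x y => g y) a w = (\sum_x a x) * \sum_y w y * g y.
Proof.
rewrite -(eq_bform _ _ (fun x y => mul1r (g y))) bform_rank1.
by congr (_ * _); apply: eq_bigr => x _; rewrite mulr1.
Qed.

Lemma kapp_delta P x0 x : kapp P (fun y => (y == x0)%:R) x = P x x0.
Proof.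
rewrite /kapp (bigD1 x0) //= eqxx mulr1 big1 ?addr0 // => y /negbTE ->.
by rewrite mulr0.
Qed.

Lemma kappZ P w t x : kapp P (fun y => t * w y) x = t * kapp P w x.
Proof. by rewrite /kapp mulr_sumr; apply: eq_bigr => y _; rewrite mulrCA. Qed.

Lemma bformZr P a w t : bform P a (fun y => t * w y) = t * bform P a w.
Proof.
rewrite !bformE mulr_sumr; apply: eq_bigr => x _.
by rewrite kappZ mulrCA.
Qed.

Lemma bformBr P a v1 v2 :
  bform P a (fun x => v1 x - v2 x) = bform P a v1 - bform P a v2.
Proof.
rewrite !bformE -sumrB; apply: eq_bigr => x _; rewrite -mulrBr; congr (_ * _).
by rewrite /kapp -sumrB; apply: eq_bigr => y _; rewrite mulrBr.
Qed.

Lemma bformBB P a w : (forall x y, P y x = P x y) ->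
  bform P (fun x => a x - w x) (fun x => a x - w x)
  = bform P a a - 2 * bform P a w + bform P w w.
Proof.
move=> Psym; rewrite bformBr !(bformC Psym (fun x => _ - _)) !bformBr (bformC Psym w a).
ring.
Qed.

End BilinearForm.

Lemma kapp_surj (F : fieldType) (X : finType) (P : X -> X -> F) :
  (forall a, (forall x, kapp P a x = 0) -> forall x, a x = 0) ->
  forall k : X -> F, exists v, forall x, kapp P v x = k x.
Proof.
move=> Pinj k.
pose M := \matrix_(i < #|X|, j < #|X|) P (enum_val j) (enum_val i).
have kappM u x : (u *m M) 0 (enum_rank x) = kapp P (fun y => u 0 (enum_rank y)) x.
  rewrite !mxE (reindex (@enum_rank X)) /=; last exact/onW_bij/enum_rank_bij.
  by apply: eq_bigr => y _; rewrite mxE !enum_rankK mulrC.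
have Munit : M \in unitmx.
  rewrite -row_free_unit; apply: inj_row_free => u uM0; apply/rowP => i.
  rewrite mxE -(enum_valK i); apply: (Pinj (fun y => u 0 (enum_rank y))) => x.
  by rewrite -kappM uM0 mxE.
exists (fun y => ((\row_i k (enum_val i)) *m invmx M) 0 (enum_rank y)) => x.
by rewrite -kappM mulmxKV // mxE enum_rankK.
Qed.

Section PositiveForms.
Variables (R : realFieldType) (X : finType).
Implicit Types (P : X -> X -> R) (a w : X -> R).

Lemma posdef_ge0 P : posdef P -> forall a, 0 <= bform P a a.
Proof.
move=> Ppos a; have [/existsP/Ppos/ltW //|] := boolP [exists x, a x != 0].
by rewrite negb_exists => /forallP a0; rewrite bform_eq0 // => x; apply/eqP/negPn/a0.
Qed.

Lemma posdef_kapp_inj P : posdef P ->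
  forall a, (forall x, kapp P a x = 0) -> forall x, a x = 0.
Proof.
move=> Ppos a Pa0 x; apply/eqP; apply: contraT => ax.
have := Ppos a (ex_intro _ x ax).
by rewrite bformE big1 ?ltxx // => y _; rewrite Pa0 mulr0.
Qed.

Lemma bform_le_sum P a w : (forall x y, P y x = P x y) -> posdef P ->
  2 * bform P a w <= bform P a a + bform P w w.
Proof.
move=> Psym Ppos; have := posdef_ge0 Ppos (fun x => a x - w x).
rewrite bformBB //; lra.
Qed.

End PositiveForms.

Definition gram (R : comNzRingType) (X : finType) (K : X -> X -> R) (x0 : X) (x y : X) : R :=
  K x x0 + K x0 y - K x y - K x0 x0.

Section Gram.
Variables (R : realFieldType) (X : finType) (K : X -> X -> R) (x0 : X).
Hypothesis Ksym : forall x y, K y x = K x y.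
Hypothesis Kneg : forall a : X -> R, (exists x, a x != 0) -> \sum_x a x = 0 -> bform K a a < 0.
Implicit Types (a : X -> R).

Lemma bform_gram a :
  bform (gram K x0) a a = 2 * (\sum_x a x) * (\sum_x a x * K x x0)
                          - bform K a a - (\sum_x a x) ^+ 2 * K x0 x0.
Proof.
rewrite /gram !bform_kerB bform_kerD bform_kerl bform_kerr bform_kerl.
have -> : \sum_y a y * K x0 y = \sum_x a x * K x x0.
  by apply: eq_bigr => y _; rewrite Ksym.
by rewrite -mulr_suml; ring.
Qed.

Lemma gram_sym x y : gram K x0 y x = gram K x0 x y.
Proof. by rewrite /gram (Ksym x0 x) (Ksym y x0) (Ksym x y); ring. Qed.

Lemma bform_le0 a : \sum_x a x = 0 -> bform K a a <= 0.
Proof.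
move=> a_sum0; have [/existsP a_neq0 |] := boolP [exists x, a x != 0].
  exact/ltW/Kneg.
by rewrite negb_exists => /forallP a0; rewrite bform_eq0 // => x; apply/eqP/negPn/a0.
Qed.

Lemma bform_gram_ge0 a : 0 <= bform (gram K x0) a a.
Proof.
pose d y := (\sum_x a x) * (y == x0)%:R.
have gram_d x : kapp (gram K x0) d x = 0.
  by rewrite kappZ kapp_delta /gram [_ + K x0 x0]addrC addrK subrr mulr0.
have d_sum : \sum_x d x = \sum_x a x.
  rewrite -mulr_sumr [X in _ * X](bigD1 x0) //= eqxx [X in _ * (_ + X)]big1 ?addr0 ?mulr1 //.
  by move=> y /negbTE ->.
have -> : bform (gram K x0) a a = bform (gram K x0) (fun x => a x - d x) (fun x => a x - d x).
  rewrite bformBB; last exact: gram_sym.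
  by rewrite !(bformE _ _ d) !big1 ?mulr0 ?subr0 ?addr0 // => x _; rewrite gram_d mulr0.
have pa_sum0 : \sum_x (a x - d x) = 0 by rewrite sumrB d_sum subrr.
by rewrite bform_gram pa_sum0 mulr0 mul0r expr0n mul0r subr0 sub0r oppr_ge0 bform_le0.
Qed.

Lemma bform_gram_gt0 a : (exists x, a x != 0) -> \sum_x a x = 0 -> 0 < bform (gram K x0) a a.
Proof.
move=> a_neq0 a_sum0.
by rewrite bform_gram a_sum0 mulr0 mul0r expr0n mul0r subr0 sub0r oppr_gt0 Kneg.
Qed.

End Gram.

Lemma cond_neg_def_bound (R : realFieldType) (X : finType) (K : X -> X -> R) :
  (forall x y, K y x = K x y) ->
  (forall a : X -> R, (exists x, a x != 0) -> \sum_x a x = 0 -> bform K a a < 0) ->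
  exists c, 0 < c /\ forall a : X -> R, (exists x, a x != 0) ->
    bform K a a < c * (\sum_x a x) ^+ 2.
Proof.
move=> Ksym Kneg; have [x0 _ | X0] := pickP (fun _ : X => true); last first.
  by exists 1; split=> // a [x]; have := X0 x.
pose P x y := 1 + gram K x0 x y.
have bform_P a : bform P a a = (\sum_x a x) ^+ 2 + bform (gram K x0) a a.
  by rewrite bform_kerD bform_kerl expr2; under eq_bigr do rewrite mulr1.
have Psym x y : P y x = P x y by rewrite /P gram_sym.
have Ppos : posdef P.
  move=> a a_neq0; rewrite bform_P.
  have [a_sum0 | a_sum_neq0] := eqVneq (\sum_x a x) 0.
    by rewrite a_sum0 expr0n add0r bform_gram_gt0.
  by rewrite ltr_pwDl ?exprn_even_gt0 ?bform_gram_ge0.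
have [v Pv] := kapp_surj (posdef_kapp_inj Ppos) (fun x => K x x0).
exists (2 + bform P v v + `|K x0 x0|); split.
  by have := posdef_ge0 Ppos v; have := normr_ge0 (K x0 x0); lra.
move=> a a_neq0; set s := \sum_x a x.
have [s0 | s_neq0] := eqVneq s 0.
  by rewrite s0 expr0n mulr0 Kneg.
have L_P : \sum_x a x * K x x0 = bform P a v by rewrite bformE; apply: eq_bigr => x _; rewrite Pv.
have := bform_le_sum a (fun x => s * v x) Psym Ppos.
rewrite !bformZr (bformC Psym (fun x => s * v x) v) bformZr bform_P -/s -L_P.
have := bform_gram x0 Ksym a; rewrite -/s.
have := ler_wpM2l (sqr_ge0 s) (ler_norm (- K x0 x0)); rewrite normrN.
have : 0 < s ^+ 2 by rewrite exprn_even_gt0.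
nra.
Qed.

Local Open Scope complex_scope.

Section ComplexForms.
Variables (R : rcfType) (X : finType).

Lemma sum_complex (f g : X -> R) : \sum_x (f x +i* g x) = (\sum_x f x) +i* (\sum_x g x).
Proof. by elim/big_rec3: _ => // x u v w _ ->; simpc. Qed.

Lemma mul_conj_complex (z w : R[i]) (m : R) :
  z * w^* * m%:C =
    ((complex.Re z * complex.Re w + complex.Im z * complex.Im w) * m)
    +i* ((complex.Im z * complex.Re w - complex.Re z * complex.Im w) * m).
Proof.
case: z w => [u v] [w1 w2] /=; simpc.
by apply/eqP; rewrite eq_complex /=; apply/andP; split; apply/eqP; ring.
Qed.

(* [kquad] conjugates with the generic [Num.conj], whereas [hermitian_kernel] uses [conjc]. *)
Lemma kquad_real (M : X -> X -> R) (a : X -> R) :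
  kquad M (fun x => (a x)%:C) = (bform M a a)%:C.
Proof.
rewrite /kquad /bform rmorph_sum; apply: eq_bigr => x _.
by rewrite rmorph_sum; apply: eq_bigr => y _; rewrite conj_Creal ?complex_real // -!rmorphM.
Qed.

Lemma kquad_ReIm (M : X -> X -> R) (lam : X -> R[i]) : (forall x y, M y x = M x y) ->
  kquad M lam = (bform M (fun x => complex.Re (lam x)) (fun x => complex.Re (lam x))
                 + bform M (fun x => complex.Im (lam x)) (fun x => complex.Im (lam x)))%:C.
Proof.
move=> Msym; rewrite /kquad.
under eq_bigr => x _ do under eq_bigr => y _ do rewrite mul_conj_complex.
under eq_bigr => x _ do rewrite sum_complex.
rewrite sum_complex; apply/eqP; rewrite eq_complex /=; apply/andP; split; apply/eqP.
  rewrite /bform -big_split; apply: eq_bigr => x _; rewrite -big_split.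
  by apply: eq_bigr => y _; rewrite mulrDl.
set a := fun x => complex.Re (lam x); set b := fun x => complex.Im (lam x).
transitivity (bform M b a - bform M a b); last by rewrite (bformC Msym b a) subrr.
rewrite /bform -sumrB; apply: eq_bigr => x _; rewrite -sumrB.
by apply: eq_bigr => y _; rewrite mulrBl.
Qed.

End ComplexForms.

Theorem theorem1 (R : realType) (X : finType) (K : X -> X -> R)
  (Ksym : forall x y, K y x = K x y)
  (Knn : forall x y, 0 <= K x y)
  (Kdiag : forall x, K x x = 0) :
  cond_strict_neg_def K ->
  exists (A : X -> X -> R) (c : R),
    strict_pos_def A /\ 0 < c /\ forall x y, K x y = - A x y + c.
Proof.
move=> Kneg.
have Kneg_real (a : X -> R) : (exists x, a x != 0) -> \sum_x a x = 0 -> bform K a a < 0.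
  move=> [x ax] a_sum0; rewrite -ltcR -kquad_real; apply: Kneg.
    by exists x; apply: contra_neq ax => -[].
  by rewrite -rmorph_sum a_sum0.
have [c [c_gt0 Kc]] := cond_neg_def_bound Ksym Kneg_real.
pose A x y := c - K x y.
have Asym x y : A y x = A x y by rewrite /A Ksym.
have Apos : posdef A.
  move=> a a_neq0; rewrite bform_kerB bform_kerl -mulr_suml.
  by have := Kc a a_neq0; rewrite expr2; nra.
exists A, c; split; last by split=> // x y; rewrite opprB subrK.
split=> [x y | lam [x lam_neq0]]; first by rewrite conjc_real Asym.
rewrite kquad_ReIm // ltcR.
have := posdef_ge0 Apos (fun x => complex.Re (lam x)).
have := posdef_ge0 Apos (fun x => complex.Im (lam x)).
have : (complex.Re (lam x) != 0) || (complex.Im (lam x) != 0).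
  by move: lam_neq0; case: (lam x) => u v; rewrite eq_complex negb_and.
case/orP=> [Re_neq0 | Im_neq0].
  by have := Apos (fun x => complex.Re (lam x)) (ex_intro _ x Re_neq0); lra.
by have := Apos (fun x => complex.Im (lam x)) (ex_intro _ x Im_neq0); lra.
Qed.
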